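(* Let $0\le l<g$ and let $\Omega$ be a formal 1-form. (1) If $\Omega$ has leading variable $\beta'$ (of some degree) for $\mathcal F_{\Gamma,\beta_{l+1}}$ with $\beta'\in\mathcal E_\Gamma$, $\beta'<\beta_{l+1}$, $\mathrm{Beg}_\Gamma(\Omega)=\beta'$ and strictly increasing positive rational $c$-sequence, then $\nu_\Gamma(\Omega)\in e_l\mathbb Z$. (2) If $\Omega$ has leading variable $\beta_{l+1}$ of degree $0$ for $\mathcal F_{\Gamma,\beta_{l+1}}$, with $\mathrm{Beg}_\Gamma(\Omega)=\beta_{l+1}$ and strictly increasing positive rational $c$-sequence, then $\nu_\Gamma(\Omega)\equiv\beta_{l+1}\pmod{e_l}$. (3) If $\Omega$ has leading variable $\beta_{l+1}$ (of any degree) for $\mathcal F_{\Gamma,\beta_{l+1}}$ with strictly increasing positive rational $c$-sequence, or has leading variable $\mathfrak n(\beta_{l+1})$ of degree $0$ for $\mathcal F_{\Gamma,\beta_{l+1}}$ with strictly increasing positive rational $c$-sequence and associated $R$ of the form $c\,a_{\beta_{l+1}}^s$ ($c\in\mathbb C^*$, $s\ge0$), then $\nu_\Gamma(\Omega)\equiv\mathrm{Beg}_\Gamma(\Omega)\pmod{e_{l+1}}$ (when $\mathrm{Beg}_\Gamma(\Omega)<\infty$).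
   Context: $\Gamma$ is a singular irreducible plane branch with Puiseux parametrization $\Gamma(t)=(t^n,\sum_{\beta\ge\beta_1}a_{\beta,\Gamma}t^\beta)$, characteristic exponents $\beta_1<\dots<\beta_g$; $e_0=n$, $e_j=\gcd(e_{j-1},\beta_j)$. For a 1-form $\omega$ with $\Gamma^*\omega=h(t)dt$, $\nu_\Gamma(\omega)=\mathrm{ord}_th+1$. $\mathcal E_\Gamma=\bigcup_i\{\beta_i+ke_i:k\ge0\}$; $\mathfrak n(\beta)$ next element. Family and leading variable: treat $a_{\beta'}$ as indeterminates; $\mathcal F_{\Gamma,\beta_j}$ = formal curves $\Gamma'(t)=(t^n,\sum_{\beta'\in\mathcal E_\Gamma}a_{\beta'}t^{\beta'})$ with $a_{\beta'}=a_{\beta',\Gamma}$ for $\beta'<\beta_j$. Write $t\,\Gamma'^*\omega=g(t)dt$. $\omega$ has leading variable $\beta$ of degree $m$ for $\mathcal F_{\Gamma,\beta_j}$ if: (i) $g=t^k\sum_{r\ge0}C_{\mathfrak n^r(\beta)}t^{\mathfrak n^r(\beta)}$, $k\ge0$, $C_{\mathfrak n^r(\beta)}$ polynomial in $a_{\beta'}$, $\beta_j\le\beta'\le\mathfrak n^r(\beta)$, $C_\beta\not\equiv0$; (ii) $C_{\mathfrak n^r(\beta)}=\tilde c\,c_{\mathfrak n^r(\beta)}a_\beta^mR\,a_{\mathfrak n^r(\beta)}+Q_{\mathfrak n^r(\beta)}$ with $\tilde c\in\mathbb C^*$, $c$-sequence $c_\beta=1,c_{\mathfrak n(\beta)},\dots$,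 $R$ polynomial in $a_{\beta'}$, $\beta_j\le\beta'<\beta$ (constant if none), $R(\Gamma)\ne0$, $Q_{\mathfrak n^r(\beta)}$ polynomial in $a_{\beta'}$, $\beta'<\mathfrak n^r(\beta)$ (variables with index $<\beta_j$ read as constants $a_{\beta',\Gamma}$); (iii) $m=0$ if $\beta\notin\{\beta_1,\dots,\beta_j\}$; (iv) $k\equiv m\beta\pmod{e_\ell}$, $\ell=\max(\{0\}\cup\{r:\beta_r<\beta\})$. $\mathrm{Beg}_\Gamma(\omega)$ is the first $\beta'\in\mathcal E_\Gamma$ with $C_{\beta'}(\Gamma)\ne0$ (evaluation at $a_{\beta'}=a_{\beta',\Gamma}$). *)

From HB Require Import structures.
From mathcomp Require Import all_boot all_order all_algebra.
From mathcomp Require Import finmap.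
From mathcomp Require Import reals Rstruct.
From mathcomp Require Import complex.
From mathcomp.multinomials Require Import monalg.

Unset Implicit Arguments.
Unset Strict Implicit.
Unset Printing Implicit Defensive.

Import Order.TTheory GRing.Theory Num.Theory.
Local Open Scope ring_scope.

Definition CC : numClosedFieldType := (Rdefinitions.R)[i].

(* The ring of polynomials over C in the countably many indeterminates
   a_0, a_1, a_2, ... ; the indeterminate a_b is [avar b].                  *)
Definition Pa := {malg CC[cmonom nat]}.
Definition avar (b : nat) : Pa := << ucm b >>.

Definition vars_in (S : pred nat) (p : Pa) : Prop :=
  forall m, m \in msupp p -> forall i, i \in finsupp (cmonom_val m) -> S i.

Definition peval (v : nat -> CC) (p : Pa) : CC :=
  mmap idfun (fun m : cmonom nat => \prod_(i <- finsupp (cmonom_val m)) v i ^+ (cmonom_val m i)) p.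

(* For a formal curve (t^n, sum_b yc b t^b) (with yc 0 = 0)
   and a formal 1-form  Omega = A(x,y) dx + B(x,y) dy  (A i j = coefficient
   of x^i y^j), we have  t * Gamma^* Omega = g(t) dt  with
      g(t) = n t^n A(t^n, y(t)) + (t y'(t)) B(t^n, y(t)).
   [tpull n yc A B N] is the coefficient of t^N in g.  It is computed with
   all series truncated at order N, which is exact since y(t) has no
   constant term.                                                           *)
Definition tpull {R : comNzRingType} (n : nat) (yc : nat -> R)
    (A B : nat -> nat -> R) (N : nat) : R :=
  let y : {poly R} := \sum_(b < N.+1) yc b *: 'X^b in
  let ty : {poly R} := \sum_(b < N.+1) (yc b *+ b) *: 'X^b in
  let sub (F : nat -> nat -> R) : {poly R} :=
    \sum_(i < N.+1) \sum_(j < N.+1) F i j *: ('X^(n * i) * y ^+ j) in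
  ((n%:R *: 'X^n) * sub A + ty * sub B)`_N.

(* Characteristic data of the branch  Gamma(t) = (t^n, sum_b a b t^b).
   beta j (1 <= j <= g) are the characteristic exponents;
   e_0 = n, e_j = gcd(e_{j-1}, beta_j).                                     *)
Fixpoint ee (n : nat) (beta : nat -> nat) (j : nat) : nat :=
  match j with 0 => n | j'.+1 => gcdn (ee n beta j') (beta j'.+1) end.

(* Gamma is a singular irreducible plane branch with Puiseux
   parametrization (t^n, sum_{b >= beta_1} a b t^b) whose characteristic
   exponents are beta_1 < ... < beta_g.                                     *)
Definition is_branch (n : nat) (a : nat -> CC) (g : nat) (beta : nat -> nat) : Prop :=
  [/\ (2 <= n)%N,
      (1 <= g)%N,
      (forall b, (b < beta 1)%N -> a b = 0),
      (forall j, (1 <= j <= g)%N ->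
         [/\ a (beta j) != 0, ~~ (ee n beta j.-1 %| beta j)%N &
             forall b, a b != 0 -> ~~ (ee n beta j.-1 %| b)%N -> (beta j <= b)%N])
    & ee n beta g = 1%N].

Definition in_EG (n g : nat) (beta : nat -> nat) (b : nat) : bool :=
  has (fun i => (beta i <= b)%N && (ee n beta i %| b - beta i)%N) (iota 1 g).

(* next element of E_Gamma after b (the bounded search range always contains
   it, since beta_g + N is in E_Gamma for all N, as e_g = 1)                *)
Definition nextEG (n g : nat) (beta : nat -> nat) (b : nat) : nat :=
  head 0%N [seq x <- iota b.+1 (b + beta g).+1 | in_EG n g beta x].

Definition ell (g : nat) (beta : nat -> nat) (b : nat) : nat :=
  \max_(1 <= r < g.+1 | (beta r < b)%N) r.

(* The family F_{Gamma, beta_j}: coefficient of t^b of the generic member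
   (a_{b,Gamma} for b < beta_j, the indeterminate a_b for b >= beta_j,
   b in E_Gamma; 0 outside E_Gamma).                                        *)
Definition famcoef (n : nat) (a : nat -> CC) (g : nat) (beta : nat -> nat)
    (j : nat) (b : nat) : Pa :=
  if in_EG n g beta b then (if (b < beta j)%N then (a b)%:MP else avar b) else 0.

(* coefficient of t^N in g(t), where t Gamma'^* Omega = g(t) dt, Gamma' the
   generic member of F_{Gamma, beta_j}                                      *)
Definition famser n a g beta (j : nat) (A B : nat -> nat -> CC) (N : nat) : Pa :=
  tpull n (famcoef n a g beta j) (fun i l => (A i l)%:MP) (fun i l => (B i l)%:MP) N.

(* [nu_is n a A B N] : nu_Gamma(Omega) = N, i.e. ord_t h + 1 = N where
   Gamma^* Omega = h(t) dt; equivalently ord_t (t h) = N.                   *)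
Definition nu_is (n : nat) (a : nat -> CC) (A B : nat -> nat -> CC) (N : nat) : Prop :=
  tpull n a A B N != 0 /\ forall M, (M < N)%N -> tpull n a A B M = 0.

(* Omega has leading variable bt of degree m for F_{Gamma, beta_j}, with
   exponent k, constant ct (= c tilde), c-sequence cs (cs x = c_x),
   polynomial R and polynomials Q r (= Q_{n^r(bt)}).                        *)
Definition leading_variable n a g beta (A B : nat -> nat -> CC)
    (j bt m k : nat) (ct : CC) (cs : nat -> CC) (R : Pa) (Q : nat -> Pa) : Prop :=
  let nx r := iter r (nextEG n g beta) bt in
  let G := famser n a g beta j A B in
  let fv i := in_EG n g beta i && (beta j <= i)%N in
  (forall N, (forall r, N != (k + nx r)%N) -> G N = 0) /\
  (forall r, vars_in (fun i => fv i && (i <= nx r)%N) (G (k + nx r)%N)) /\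
  G (k + bt)%N != 0 /\
  ct != 0 /\ cs bt = 1 /\
  (forall r, G (k + nx r)%N =
      ct%:MP * (cs (nx r))%:MP * famcoef n a g beta j bt ^+ m * R
        * famcoef n a g beta j (nx r) + Q r) /\
  vars_in (fun i => fv i && (i < bt)%N) R /\
  peval a R != 0 /\
  (forall r, vars_in (fun i => fv i && (i < nx r)%N) (Q r)) /\
  (~~ has (fun i => beta i == bt) (iota 1 j) -> m = 0%N) /\
  k = (m * bt)%N %[mod ee n beta (ell g beta bt)].

Definition cseq_pos_incr n g beta (bt : nat) (cs : nat -> CC) : Prop :=
  exists q : nat -> rat,
    [/\ forall r, cs (iter r (nextEG n g beta) bt) = ratr (q r),
        forall r, 0 < q r &
        forall r, q r < q r.+1].

(* [beg_is ... r] : Beg_Gamma(Omega) = n^r(bt), i.e. n^r(bt) is the first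
   element x of E_Gamma (x >= bt) with C_x(Gamma) != 0, where C_x is the
   coefficient of t^{k+x} in g.                                             *)
Definition beg_is n a g beta (A B : nat -> nat -> CC) (j bt k r : nat) : Prop :=
  let C r' := peval a (famser n a g beta j A B (k + iter r' (nextEG n g beta) bt)%N) in
  C r != 0 /\ forall r', (r' < r)%N -> C r' = 0.

From HB Require Import structures.
From mathcomp Require Import all_boot all_order all_algebra.
From mathcomp Require Import finmap.
From mathcomp Require Import reals Rstruct.
From mathcomp Require Import complex.
From mathcomp.multinomials Require Import monalg.
From mathcomp Require Import zify.
From Stdlib Require Import FunctionalExtensionality.
Import Order.TTheory GRing.Theory Num.Theory.
Local Open Scope ring_scope.

(* Specialising the indeterminates of F_{Gamma,beta_{l+1}} to the coefficients
   of Gamma itself turns the coefficients C of g(t) into those of t Gamma^*Omega.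
   By (i) these vanish outside the exponents k + n^r(beta), so
   nu_Gamma(Omega) = k + Beg_Gamma(Omega).  By (iv), k = m beta modulo
   e_{ell(beta)}, and in each case of the theorem e_L divides m beta for the
   relevant L >= ell(beta): either m = 0, or beta = beta_{l+1} is a multiple of
   e_{l+1}, or beta is an element of E_Gamma below beta_{l+1}, hence a multiple
   of e_l.  Thus nu_Gamma(Omega) = Beg_Gamma(Omega) modulo e_L. *)

Definition monom_eval (v : nat -> CC) (m : cmonom nat) : CC :=
  \prod_(i <- finsupp (cmonom_val m)) v i ^+ cmonom_val m i.

Lemma monom_evalE v m (D : {fset nat}) : (finsupp (cmonom_val m) `<=` D)%fset ->
  monom_eval v m = \prod_(i <- D) v i ^+ cmonom_val m i.
Proof.
move=> le; rewrite /monom_eval (big_fset_incl _ le) // => x _.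
by rewrite -cmE_neq0 => /negbNE/eqP ->; rewrite expr0.
Qed.

Lemma monom_eval_mmorphism v : mmorphism (monom_eval v).
Proof.
split; last by rewrite /monom_eval mdom1 big_seq_fset0.
move=> x y /=; set D := (finsupp (cmonom_val x) `|` finsupp (cmonom_val y))%fset.
rewrite (monom_evalE v (mmul x y) D); last by rewrite /D -mdomD.
rewrite (monom_evalE v x D) ?fsubsetUl // (monom_evalE v y D) ?fsubsetUr //.
by rewrite -big_split /=; apply: eq_bigr => i _; rewrite cmM exprD.
Qed.

HB.instance Definition _ v :=
  isMultiplicative.Build _ _ (monom_eval v) (monom_eval_mmorphism v).

Definition peval_rmorphism (v : nat -> CC) : {rmorphism Pa -> CC} :=
  mmap idfun (monom_eval v).

Lemma pevalE v p : peval v p = peval_rmorphism v p.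
Proof. by []. Qed.

Lemma peval_avar v b : peval v (avar b) = v b.
Proof. by rewrite /peval /avar mmapU /= mul1r mdomU big_seq_fset1 cmUU expr1. Qed.

Lemma pevalC v c : peval v c%:MP = c.
Proof. by rewrite pevalE /= mmapC. Qed.

Lemma tpull_rmorph (R S : comNzRingType) (f : {rmorphism R -> S}) n yc A B N :
  f (tpull n yc A B N) =
  tpull n (fun b => f (yc b)) (fun i j => f (A i j)) (fun i j => f (B i j)) N.
Proof.
rewrite /tpull -coef_map; congr (_`_N).
have map_series (c : nat -> R) : map_poly f (\sum_(b < N.+1) c b *: 'X^b) =
    \sum_(b < N.+1) f (c b) *: 'X^b.
  by rewrite rmorph_sum; apply: eq_bigr => b _; rewrite /= map_polyZ map_polyXn.
have map_subst (F : nat -> nat -> R) :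
  map_poly f (\sum_(i < N.+1) \sum_(j < N.+1)
     F i j *: ('X^(n * i) * (\sum_(b < N.+1) yc b *: 'X^b) ^+ j)) =
  \sum_(i < N.+1) \sum_(j < N.+1)
     f (F i j) *: ('X^(n * i) * (\sum_(b < N.+1) f (yc b) *: 'X^b) ^+ j).
  rewrite rmorph_sum; apply: eq_bigr => i _; rewrite rmorph_sum; apply: eq_bigr => j _.
  by rewrite /= map_polyZ rmorphM /= !rmorphXn /= map_polyX map_series.
rewrite rmorphD !rmorphM /= !map_subst (map_series (fun b => yc b *+ b)).
rewrite map_polyZ map_polyXn rmorph_nat.
suff -> : \sum_(b < N.+1) f (yc b *+ b) *: 'X^b =
    \sum_(b < N.+1) (f (yc b) *+ b) *: 'X^b :> {poly S} by [].
by apply: eq_bigr => b _; rewrite rmorphMn.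
Qed.

Lemma eq_tpull (R : comNzRingType) n (yc yc' : nat -> R) (A A' B B' : nat -> nat -> R) N :
  yc =1 yc' -> A =2 A' -> B =2 B' -> tpull n yc A B N = tpull n yc' A' B' N.
Proof.
move=> /functional_extensionality -> eqA eqB.
have -> : A = A' by do 2 (apply: functional_extensionality => ?); apply: eqA.
by have -> : B = B' by do 2 (apply: functional_extensionality => ?); apply: eqB.
Qed.

Lemma head_filter_iota {p : pred nat} {m len : nat} : has p (iota m len) ->
  let h := head 0%N [seq x <- iota m len | p x] in
  [/\ p h, (m <= h)%N & forall y, (m <= y)%N -> (y < h)%N -> ~~ p y].
Proof.
elim: len m => [|len IH] m //=.
case pm: (p m) => /=; first by split => // y my ym; lia.
move=> /IH [ph mh hmin]; split => //; first by lia.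
move=> y my yh; case: (ltnP m y) => my'; first exact: hmin.
have -> : y = m by lia.
by rewrite pm.
Qed.

Section Branch.
Set Implicit Arguments.
Unset Strict Implicit.

Variables (n : nat) (a : nat -> CC) (g : nat) (beta : nat -> nat).
Hypothesis branch : is_branch n a g beta.

Local Notation e := (ee n beta).
Local Notation EG := (in_EG n g beta).
Local Notation next := (nextEG n g beta).
Local Notation ell := (ell g beta).

Lemma dvdn_ee i j : (i <= j)%N -> (e j %| e i)%N.
Proof.
elim: j => [|j IH]; first by rewrite leqn0 => /eqP ->.
rewrite leq_eqVlt => /orP [/eqP -> // | ]; rewrite ltnS => /IH.
by apply: dvdn_trans; rewrite /= dvdn_gcdl.
Qed.

Lemma ee_dvdn_beta j : (1 <= j)%N -> (e j %| beta j)%N.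
Proof. by case: j => // j _; rewrite /= dvdn_gcdr. Qed.

Lemma beta_ltnS j : (1 <= j)%N -> (j < g)%N -> (beta j < beta j.+1)%N.
Proof.
case: branch => _ _ _ hchar _ j1 jg.
have [_ _ beta_min] := hchar j (ltac:(lia)).
have [aS0 notdvdS _] := hchar j.+1 (ltac:(lia)).
have notdvd : ~~ (e j.-1 %| beta j.+1)%N.
  by apply: contra notdvdS; apply: dvdn_trans; apply: dvdn_ee; lia.
rewrite ltn_neqAle (beta_min _ aS0 notdvd) andbT.
by apply: contraNneq notdvdS => <-; rewrite ee_dvdn_beta.
Qed.

Lemma ltn_beta : {in [pred i | 1 <= i <= g]%N &, {mono beta : i j / (i < j)%N}}.
Proof.
apply: leqW_mono_in; apply: leq_mono_in; apply: homo_ltn_in => [y x z|i j iD jD k|i].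
- exact: ltn_trans.
- by rewrite !inE in iD jD *; lia.
- by rewrite !inE => /andP [i1 _] /andP [_ ig]; apply: beta_ltnS.
Qed.

Lemma in_EGP b : reflect (exists2 i, (1 <= i <= g)%N &
  (beta i <= b)%N && (e i %| b - beta i)%N) (EG b).
Proof.
by apply: (iffP hasP) => -[i ig hi]; exists i; rewrite ?mem_iota in ig *; lia.
Qed.

Lemma in_EG_beta j : (1 <= j <= g)%N -> EG (beta j).
Proof. by move=> jg; apply/in_EGP; exists j; rewrite // leqnn subnn dvdn0. Qed.

Lemma in_EG_support b : a b != 0 -> EG b.
Proof.
case: branch => _ g1 a_lt_beta1 hchar eg1 ab.
suff hi : forall d i, (i + d)%N = g -> (1 <= i)%N -> (beta i <= b)%N -> EG b.
  apply: (hi g.-1 1%N) => //; first by lia.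
  by rewrite leqNgt; apply: contra ab => /a_lt_beta1 ->.
(* descending induction on i: stop at the last beta_i <= b, where e_i | b *)
elim=> [|d IH] i id i1 bi.
  rewrite addn0 in id; subst i.
  by apply/in_EGP; exists g; rewrite ?bi ?eg1 ?dvd1n ?leqnn ?g1.
have [bSi | ltb] := leqP (beta i.+1) b; first by apply: (IH i.+1) => //; lia.
have [_ _ beta_min] := hchar i.+1 (ltac:(lia)).
have ei_b : (e i %| b)%N.
  by apply: contraTT ltb => /(beta_min _ ab); rewrite -leqNgt.
by apply/in_EGP; exists i; rewrite ?bi ?dvdn_sub ?ee_dvdn_beta //; lia.
Qed.

Lemma has_EG_after b : has EG (iota b.+1 (b + beta g).+1).
Proof.
case: branch => _ g1 _ _ eg1; apply/hasP; exists (b.+1 + beta g)%N.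
  by rewrite mem_iota; lia.
by apply/in_EGP; exists g; rewrite ?eg1 ?dvd1n ?leq_addl //; lia.
Qed.

Lemma nextEG_gt b : (b < next b)%N.
Proof. by have [] := head_filter_iota (has_EG_after b). Qed.

Lemma nextEG_min b y : (b < y)%N -> EG y -> (next b <= y)%N.
Proof.
have [_ _ hmin] := head_filter_iota (has_EG_after b).
by move=> by_ Ey; rewrite leqNgt; apply/negP => /(hmin _ by_); rewrite Ey.
Qed.

Lemma iter_nextEG_ltn bt : {homo (fun r => iter r next bt) : r r' / (r < r')%N}.
Proof. by apply: homo_ltn => [y x z|r]; [exact: ltn_trans | exact: nextEG_gt]. Qed.

Lemma iter_nextEG_geq bt r : (bt + r <= iter r next bt)%N.
Proof.
elim: r => [|r IH] /=; first by rewrite addn0.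
by rewrite addnS; apply: leq_ltn_trans IH (nextEG_gt _).
Qed.

Lemma ell_leq x L :
  (forall r, (1 <= r <= g)%N -> (beta r < x)%N -> (r <= L)%N) -> (ell x <= L)%N.
Proof.
move=> hL; rewrite /ell big_nat_cond.
apply: (big_ind (fun y => y <= L)%N) => // [y z|r]; first by rewrite geq_max => -> ->.
by move=> /andP [/andP [r1 rg] br]; apply: hL; lia.
Qed.

Lemma ell_ltn_beta j x : (1 <= j <= g)%N -> (x <= beta j)%N -> (ell x < j)%N.
Proof.
move=> jg xj; suff : (ell x <= j.-1)%N by lia.
apply: ell_leq => r rg rx; have : (beta r < beta j)%N by lia.
by rewrite ltn_beta ?inE //; lia.
Qed.

Lemma ell_nextEG_beta j : (1 <= j <= g)%N -> (ell (next (beta j)) <= j)%N.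
Proof.
move=> jg; have [jSg | ] := ltnP j g; last by move=> gj; apply: ell_leq; lia.
rewrite -ltnS; apply: ell_ltn_beta; first by lia.
by apply: nextEG_min; [apply: beta_ltnS | apply: in_EG_beta]; lia.
Qed.

Lemma dvdn_ee_EG j x : (j < g)%N -> EG x -> (x < beta j.+1)%N -> (e j %| x)%N.
Proof.
move=> jg /in_EGP [i ig /andP [ix ei_x]] xj.
have ij : (i <= j)%N.
  by rewrite -ltnS -ltn_beta ?inE; [lia | lia | lia].
apply: dvdn_trans (dvdn_ee ij) _.
by rewrite -(subnK ix) dvdn_add // ee_dvdn_beta //; lia.
Qed.

Lemma peval_famser j A B N : peval a (famser n a g beta j A B N) = tpull n a A B N.
Proof.
rewrite pevalE tpull_rmorph; apply: eq_tpull => [b|i l|i l]; last 2 first.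
- by rewrite -pevalE pevalC.
- by rewrite -pevalE pevalC.
rewrite /famcoef; case: ifP => [_ | notEb].
  by case: ifP => _; rewrite -pevalE; [rewrite pevalC | rewrite peval_avar].
rewrite rmorph0; apply/esym/eqP; apply: contraFT notEb.
exact: in_EG_support.
Qed.

Lemma nu_is_beg A B j bt k r0 :
  (forall N, (forall r, N != (k + iter r next bt)%N) -> famser n a g beta j A B N = 0) ->
  beg_is n a g beta A B j bt k r0 ->
  nu_is n a A B (k + iter r0 next bt).
Proof.
rewrite /beg_is /nu_is => G0 [beg_ne0 before_beg].
split=> [|M ltM]; first by rewrite -(peval_famser j A B).
rewrite -(peval_famser j A B).
(* an exponent M = k + n^r(beta) forces r <= M, so r ranges over iota 0 M.+1 *)
have [[r _ /eqP MG] | notG] :=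
  altP (@hasP _ (fun r => M == k + iter r next bt)%N (iota 0 M.+1)).
  rewrite MG in ltM *; apply: before_beg; rewrite ltnNge; apply/negP => r0r.
  by have := ltnW_homo (iter_nextEG_ltn bt) r0r; lia.
rewrite G0 ?pevalE ?rmorph0 // => r; apply: contra notG => /eqP MG.
apply/hasP; exists r; rewrite ?MG // mem_iota.
by have := iter_nextEG_geq bt r; lia.
Qed.

Lemma leading_variable_nu_mod A B j bt m k ct cs R Q r L :
  leading_variable n a g beta A B j bt m k ct cs R Q ->
  beg_is n a g beta A B j bt k r ->
  (ell bt <= L)%N -> (e L %| m * bt)%N ->
  exists N, nu_is n a A B N /\ N = iter r next bt %[mod e L].
Proof.
case=> G0 [_ [_ [_ [_ [_ [_ [_ [_ [_ k_mod]]]]]]]]] beg ellL eL_mbt.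
have k_modL : k = m * bt %[mod e L].
  have mod_ell := @modn_dvdm (e (ell bt)) _ _ (dvdn_ee ellL).
  by rewrite -mod_ell k_mod mod_ell.
exists (k + iter r next bt)%N; split; first exact: nu_is_beg G0 beg.
by rewrite -modnDml k_modL (eqP eL_mbt).
Qed.

End Branch.

Theorem mainTheorem15 (n : nat) (a : nat -> CC) (g : nat) (beta : nat -> nat)
    (A B : nat -> nat -> CC) (l : nat) :
  is_branch n a g beta -> (l < g)%N ->
  (* (1) *)
  (forall (bt m k : nat) (ct : CC) (cs : nat -> CC) (R : Pa) (Q : nat -> Pa),
     in_EG n g beta bt -> (bt < beta l.+1)%N ->
     leading_variable n a g beta A B l.+1 bt m k ct cs R Q ->
     cseq_pos_incr n g beta bt cs ->
     beg_is n a g beta A B l.+1 bt k 0 ->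
     exists N, nu_is n a A B N /\ (ee n beta l %| N)%N)
  /\
  (* (2) *)
  (forall (k : nat) (ct : CC) (cs : nat -> CC) (R : Pa) (Q : nat -> Pa),
     leading_variable n a g beta A B l.+1 (beta l.+1) 0 k ct cs R Q ->
     cseq_pos_incr n g beta (beta l.+1) cs ->
     beg_is n a g beta A B l.+1 (beta l.+1) k 0 ->
     exists N, nu_is n a A B N /\ N = beta l.+1 %[mod ee n beta l])
  /\
  (* (3) *)
  (forall (bt m k : nat) (ct : CC) (cs : nat -> CC) (R : Pa) (Q : nat -> Pa),
     ((bt = beta l.+1 /\
       leading_variable n a g beta A B l.+1 bt m k ct cs R Q)
      \/
      (bt = nextEG n g beta (beta l.+1) /\ m = 0%N /\
       leading_variable n a g beta A B l.+1 bt m k ct cs R Q /\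
       exists (c : CC) (s : nat), c != 0 /\ R = c%:MP * avar (beta l.+1) ^+ s)) ->
     cseq_pos_incr n g beta bt cs ->
     forall r, beg_is n a g beta A B l.+1 bt k r ->
     exists N, nu_is n a A B N /\
       N = iter r (nextEG n g beta) bt %[mod ee n beta l.+1]).
Proof.
(* The c-sequence (and the shape of R in (3)) only serve in the paper to make
   Beg_Gamma(Omega) finite, which is assumed here through [beg_is]. *)
move=> branch lg; have l1g : (1 <= l.+1 <= g)%N by lia.
split; [|split].
- move=> bt m k ct cs R Q Ebt bt_lt LV _ beg.
  have e_bt := dvdn_ee_EG branch lg Ebt bt_lt.
  have ell_bt : (ell g beta bt <= l)%N by rewrite -ltnS (ell_ltn_beta branch) // ltnW.
  have [N [nuN modN]] := leading_variable_nu_mod branch LV beg ell_bt (dvdn_mull m e_bt).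
  by exists N; split; rewrite // /dvdn modN.
- move=> k ct cs R Q LV _ beg.
  have ell_b : (ell g beta (beta l.+1) <= l)%N by rewrite -ltnS (ell_ltn_beta branch).
  have e_0 : (ee n beta l %| 0 * beta l.+1)%N by rewrite mul0n dvdn0.
  have [N [nuN modN]] := leading_variable_nu_mod branch LV beg ell_b e_0.
  by exists N.
- move=> bt m k ct cs R Q H _ r beg.
  have [LV ell_bt e_mbt] : [/\ leading_variable n a g beta A B l.+1 bt m k ct cs R Q,
      (ell g beta bt <= l.+1)%N & (ee n beta l.+1 %| m * bt)%N].
    case: H => [[-> LV] | [-> [-> [LV _]]]]; split=> //.
    + by rewrite ltnW // (ell_ltn_beta branch).
    + by rewrite dvdn_mull // ee_dvdn_beta.
    + exact: ell_nextEG_beta branch _ l1g.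
  have [N [nuN modN]] := leading_variable_nu_mod branch LV beg ell_bt e_mbt.
  by exists N.
Qed.
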